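(* Let $F$ be an infinite field and $n\ge2$. Let $z_1,\dots,z_k$ be distinct variables of nonzero degrees $g_1,\dots,g_k\in\{1,\dots,n-1\}$ with $g_1+\dots+g_k\le n-1$, and let $y_1,\dots,y_k,y$ be variables of degree $0$. Let $f=[z_1,y_1,z_2,y_2,\dots,z_k,y_k]$. Then for every $1\le i\le k$, $$[z_1,y_1,\dots,z_{i-1},y_{i-1},z_i,y,y_i,z_{i+1},y_{i+1},\dots,z_k,y_k]\in\langle\{f\}\cup I\rangle_{T_{\mathbb{Z}_n}}.$$
   Context: $UT_n(F)^{(-)}$: $n\times n$ upper triangular matrices with bracket $[a,b]=ab-ba$ and canonical $\mathbb{Z}_n$-grading (degree-$k$ component spanned by $e_{ij}$ with $j-i=k$); elements of $\mathbb{Z}_n\setminus\{0\}$ are identified with $1,\dots,n-1$. $I$ is its $T_{\mathbb{Z}_n}$-ideal of graded identities in the free $\mathbb{Z}_n$-graded Lie algebra $\mathcal{L}_{\mathbb{Z}_n}$ (countably many variables of each degree). Commutators are left normed; $\langle S\rangle_{T_{\mathbb{Z}_n}}$ is the smallest graded ideal containing $S$ invariant under degree-preserving endomorphisms. *)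

From HB Require Import structures.
From mathcomp Require Import all_boot all_order all_algebra.
Set Implicit Arguments. Unset Strict Implicit. Unset Printing Implicit Defensive.
Import GRing.Theory.
Local Open Scope ring_scope.

(* The free Lie algebra L_{Z_n} is the quotient of these terms by the      *)
(* congruence [lequiv] generated by the Lie algebra axioms below.          *)
Inductive lterm (n : nat) (F : Type) : Type :=
| LVar of 'Z_n & nat
| LZero
| LAdd of lterm n F & lterm n F
| LScale of F & lterm n F
| LBr of lterm n F & lterm n F.

Arguments LZero {n F}.

Section Free.
Variables (n : nat) (F : fieldType).
Local Notation term := (lterm n F).

Inductive lequiv : term -> term -> Prop :=
| le_refl t : lequiv t t
| le_sym t u : lequiv t u -> lequiv u t
| le_trans t u v : lequiv t u -> lequiv u v -> lequiv t v
| le_addC t u : lequiv t u -> forall t' u', lequiv t' u' -> lequiv (LAdd t t') (LAdd u u')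
| le_scaleC c t u : lequiv t u -> lequiv (LScale c t) (LScale c u)
| le_brC t u : lequiv t u -> forall t' u', lequiv t' u' -> lequiv (LBr t t') (LBr u u')
| le_addA t u v : lequiv (LAdd t (LAdd u v)) (LAdd (LAdd t u) v)
| le_addCom t u : lequiv (LAdd t u) (LAdd u t)
| le_add0 t : lequiv (LAdd LZero t) t
| le_addN t : lequiv (LAdd t (LScale (-1) t)) LZero
| le_scaleDr c t u : lequiv (LScale c (LAdd t u)) (LAdd (LScale c t) (LScale c u))
| le_scaleDl c d t : lequiv (LScale (c + d) t) (LAdd (LScale c t) (LScale d t))
| le_scaleA c d t : lequiv (LScale c (LScale d t)) (LScale (c * d) t)
| le_scale1 t : lequiv (LScale 1 t) t
| le_brDl t u v : lequiv (LBr (LAdd t u) v) (LAdd (LBr t v) (LBr u v))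
| le_brDr t u v : lequiv (LBr t (LAdd u v)) (LAdd (LBr t u) (LBr t v))
| le_brZl c t u : lequiv (LBr (LScale c t) u) (LScale c (LBr t u))
| le_brZr c t u : lequiv (LBr t (LScale c u)) (LScale c (LBr t u))
| le_brxx t : lequiv (LBr t t) LZero
| le_jacobi t u v :
    lequiv (LAdd (LBr (LBr t u) v) (LAdd (LBr (LBr u v) t) (LBr (LBr v t) u))) LZero.

Inductive lhom : 'Z_n -> term -> Prop :=
| hom_var d i : lhom d (LVar F d i)
| hom_zero d : lhom d LZero
| hom_add d t u : lhom d t -> lhom d u -> lhom d (LAdd t u)
| hom_scale d c t : lhom d t -> lhom d (LScale c t)
| hom_br d e t u : lhom d t -> lhom e u -> lhom (d + e) (LBr t u).

(* Substitution of variables; it is degree preserving (= a graded         *)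
(* endomorphism of L_{Z_n}) when every Var d i is sent to a term of         *)
(* degree d.                                                               *)
Fixpoint lsubst (s : 'Z_n -> nat -> term) (t : term) : term :=
  match t with
  | LVar d i => s d i
  | LZero => LZero
  | LAdd t u => LAdd (lsubst s t) (lsubst s u)
  | LScale c t => LScale c (lsubst s t)
  | LBr t u => LBr (lsubst s t) (lsubst s u)
  end.

Definition graded_subst (s : 'Z_n -> nat -> term) : Prop :=
  forall d i, lhom d (s d i).

(* <S>_{T_{Z_n}} : the ideal generated by all graded-endomorphic images   *)
(* of elements of S, closed under equality in L_{Z_n}.                    *)
Inductive in_TIdeal (S : term -> Prop) : term -> Prop :=
| TI_gen s sg : S s -> graded_subst sg -> in_TIdeal S (lsubst sg s)
| TI_zero : in_TIdeal S LZero
| TI_add t u : in_TIdeal S t -> in_TIdeal S u -> in_TIdeal S (LAdd t u)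
| TI_scale c t : in_TIdeal S t -> in_TIdeal S (LScale c t)
| TI_brl t u : in_TIdeal S t -> in_TIdeal S (LBr t u)
| TI_brr t u : in_TIdeal S u -> in_TIdeal S (LBr t u)
| TI_equiv t u : in_TIdeal S t -> lequiv t u -> in_TIdeal S u.

Definition UT_hom (d : 'Z_n) (A : 'M[F]_n) : Prop :=
  forall i j : 'I_n, A i j != 0 -> (i <= j)%N /\ (j - i)%N = (d : nat).

Fixpoint leval (rho : 'Z_n -> nat -> 'M[F]_n) (t : term) : 'M[F]_n :=
  match t with
  | LVar d i => rho d i
  | LZero => 0
  | LAdd t u => leval rho t + leval rho u
  | LScale c t => c *: leval rho t
  | LBr t u => leval rho t *m leval rho u - leval rho u *m leval rho t
  end.

Definition graded_eval (rho : 'Z_n -> nat -> 'M[F]_n) : Prop :=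
  forall d i, UT_hom d (rho d i).

(* I : the graded identities of UT_n(F)^(-). *)
Definition UT_identity (t : term) : Prop :=
  forall rho, graded_eval rho -> leval rho t = 0.

Definition lcomm (s : seq term) : term :=
  match s with
  | [::] => LZero
  | x :: s' => foldl (@LBr n F) x s'
  end.

End Free.

Definition infinite_field (F : fieldType) : Prop :=
  forall s : seq F, exists x : F, x \notin s.

From mathcomp Require Import all_boot all_order all_algebra.
From Stdlib Require Import Setoid Morphisms.
Import GRing.Theory.
Local Open Scope ring_scope.

(* Since y has degree 0, replacing a single variable x of f by [x, y] is a
   graded substitution, so every commutator obtained from f by replacing one
   entry x by [x, y] lies in <f>.  The Leibniz rule
   [u, x, y] = [u, [x, y]] + [u, y, x] moves y one step to the right at the
   cost of such a term, so by induction y may be inserted after any entry. *)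

Section FreeLieAlgebra.
Context {n : nat} {F : fieldType}.
Local Notation term := (lterm n F).
Local Notation lbr := (@LBr n F).

#[local] Instance lequiv_Equivalence : Equivalence (@lequiv n F).
Proof. split; [exact: le_refl | exact: le_sym | exact: le_trans]. Qed.

#[local] Hint Resolve le_refl : core.

#[local] Instance LAdd_Proper :
  Proper (@lequiv n F ==> @lequiv n F ==> @lequiv n F) (@LAdd n F).
Proof. by move=> ? ? ? ? ? ?; apply: le_addC. Qed.

#[local] Instance LScale_Proper c : Proper (@lequiv n F ==> @lequiv n F) (LScale c).
Proof. by move=> ? ? ?; apply: le_scaleC. Qed.

#[local] Instance LBr_Proper : Proper (@lequiv n F ==> @lequiv n F ==> @lequiv n F) lbr.
Proof. by move=> ? ? ? ? ? ?; apply: le_brC. Qed.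

#[local] Instance foldl_br_Proper : Proper (@lequiv n F ==> eq ==> @lequiv n F) (foldl lbr).
Proof.
move=> t u tu l _ <-; elim: l t u tu => [|x l IHl] t u tu //=.
by apply: IHl; rewrite tu.
Qed.

#[local] Instance in_TIdeal_Proper (S : term -> Prop) :
  Proper (@lequiv n F ==> iff) (in_TIdeal S).
Proof. by move=> t u tu; split=> /TI_equiv; apply; last symmetry. Qed.

Lemma lequiv_addr0 (t : term) : lequiv (LAdd t LZero) t.
Proof. by rewrite le_addCom le_add0. Qed.

Lemma lequiv_addr_eq0 (t u : term) : lequiv (LAdd t u) LZero -> lequiv u (LScale (-1) t).
Proof.
move=> tu0.
have Nt_t : lequiv (LAdd (LScale (-1) t) t) LZero by rewrite le_addCom le_addN.
by rewrite -[u]le_add0 -Nt_t -le_addA tu0 lequiv_addr0.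
Qed.

Lemma lequiv_brN (u v : term) : lequiv (LBr u v) (LScale (-1) (LBr v u)).
Proof.
apply: lequiv_addr_eq0; rewrite -(le_brxx (LAdd v u)).
rewrite le_brDl !le_brDr !le_brxx le_add0 lequiv_addr0.
by rewrite le_addCom.
Qed.

Lemma lequiv_oppK (t : term) : lequiv (LScale (-1) (LScale (-1) t)) t.
Proof. by rewrite le_scaleA mulrNN mulr1 le_scale1. Qed.

Lemma lequiv_br_leibniz (u x y : term) :
  lequiv (LBr (LBr u x) y) (LAdd (LBr u (LBr x y)) (LBr (LBr u y) x)).
Proof.
have jacobi := le_jacobi u x y.
rewrite le_addCom in jacobi.
rewrite (lequiv_addr_eq0 _ _ jacobi) le_scaleDr (lequiv_brN u (LBr x y)).
by rewrite (lequiv_brN y u) le_brZl lequiv_oppK.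
Qed.

Lemma foldl_br_add (l : seq term) (t u : term) :
  lequiv (foldl lbr (LAdd t u) l) (LAdd (foldl lbr t l) (foldl lbr u l)).
Proof.
elim: l t u => [|x l IHl] t u //=.
by rewrite le_brDl IHl.
Qed.

Lemma lcomm_rcons_cat (s : seq term) (x : term) (t : seq term) :
  lcomm (rcons s x ++ t) = foldl lbr (lcomm (rcons s x)) t.
Proof. by case: s => [|u s] //=; rewrite foldl_cat -cats1 foldl_cat. Qed.

Lemma lsubst_lcomm (sg : 'Z_n -> nat -> term) (s : seq term) :
  lsubst sg (lcomm s) = lcomm (map (lsubst sg) s).
Proof. by case: s => [|x s] //=; elim: s x => [|u s IHs] x //=; rewrite IHs. Qed.

Lemma in_TIdeal_lcomm_insert (S : term -> Prop) (T : Type) (e : T -> term)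
    (s : seq T) (y : term) :
  (forall p x q, s = p ++ x :: q ->
     in_TIdeal S (lcomm (map e p ++ LBr (e x) y :: map e q))) ->
  forall p x q, s = p ++ x :: q ->
    in_TIdeal S (lcomm (map e p ++ e x :: y :: map e q)).
Proof.
move=> S_br p; elim/last_ind: p => [|p x0 IHp] x q Es; first exact: S_br [::] x q Es.
have S_br_x := S_br _ _ _ Es.
have S_ins_x0 := IHp x0 (x :: q) (etrans Es (cat_rcons _ _ _)).
rewrite -cat_rcons lcomm_rcons_cat /= in S_ins_x0.
rewrite map_rcons !lcomm_rcons_cat in S_br_x *.
by rewrite /= lequiv_br_leibniz foldl_br_add; apply: TI_add.
Qed.

Definition lvar (v : 'Z_n * nat) : term := LVar F v.1 v.2.

Definition subst_br_var (v : 'Z_n * nat) (y : term) (d : 'Z_n) (m : nat) : term :=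
  if (d, m) == v then LBr (lvar v) y else LVar F d m.

Lemma graded_subst_br_var v y : lhom 0 y -> graded_subst (subst_br_var v y).
Proof.
move=> hom_y d m; rewrite /subst_br_var.
case: eqP => [<-|_]; last exact: hom_var.
by rewrite -[d in lhom d _]addr0; apply: hom_br => //; apply: hom_var.
Qed.

Lemma map_lsubst_br_var v y (p : seq ('Z_n * nat)) :
  v \notin p -> map (lsubst (subst_br_var v y)) (map lvar p) = map lvar p.
Proof.
move=> v_p; rewrite -map_comp; apply/eq_in_map => -[d m] dm_p /=.
rewrite /subst_br_var; case: eqP => // dm_v.
by rewrite -dm_v dm_p in v_p.
Qed.

Lemma in_TIdeal_lcomm_br_var (S : term -> Prop) (vs : seq ('Z_n * nat)) y :
  S (lcomm (map lvar vs)) -> uniq vs -> lhom 0 y ->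
  forall p v q, vs = p ++ v :: q ->
    in_TIdeal S (lcomm (map lvar p ++ LBr (lvar v) y :: map lvar q)).
Proof.
move=> S_vs vs_uniq hom_y p v q Evs.
have /and3P [_ v_p /andP [v_q _]] : [&& uniq p, v \notin p & uniq (v :: q)].
  by move: vs_uniq; rewrite Evs cat_uniq /= has_sym /= negb_or => /and3P [-> /andP [->]].
have := TI_gen S_vs (graded_subst_br_var v y hom_y).
rewrite lsubst_lcomm Evs map_cat /= map_cat /= !map_lsubst_br_var //.
by rewrite /= /subst_br_var -surjective_pairing eqxx.
Qed.

Lemma in_TIdeal_lcomm_insert_var {S : term -> Prop} {vs : seq ('Z_n * nat)} y :
  S (lcomm (map lvar vs)) -> uniq vs -> lhom 0 y ->
  forall p v q, vs = p ++ v :: q ->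
    in_TIdeal S (lcomm (map lvar p ++ lvar v :: y :: map lvar q)).
Proof.
move=> S_vs vs_uniq hom_y.
by apply: in_TIdeal_lcomm_insert; apply: in_TIdeal_lcomm_br_var.
Qed.

End FreeLieAlgebra.

Theorem mainTheorem12 (F : fieldType) (n k : nat)
  (g : 'I_k -> 'Z_n) (a b : 'I_k -> nat) (c : nat) :
  infinite_field F ->
  (2 <= n)%N ->
  (forall j, g j != 0) ->
  (\sum_(j < k) (g j : nat) <= n - 1)%N ->
  injective (fun j => (g j, a j)) ->
  injective b ->
  (forall j, b j != c) ->
  let z j := LVar F (g j) (a j) in
  let yy j := LVar F (0 : 'Z_n) (b j) in
  let y := LVar F (0 : 'Z_n) c in
  let f := lcomm (flatten [seq [:: z j; yy j] | j <- enum 'I_k]) in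
  forall i : 'I_k,
    in_TIdeal (fun t => t = f \/ UT_identity t)
      (lcomm (flatten [seq (if j == i then [:: z j; y; yy j] else [:: z j; yy j])
                      | j <- enum 'I_k])).
Proof.
move=> _ _ g_neq0 _ inj_za inj_b _ z yy y f i.
pose vars s := [seq if t then (g j, a j) else (0, b j) | j <- s, t <- [:: true; false]].
have Evars s : flatten [seq [:: z j; yy j] | j <- s] = map (@lvar n F) (vars s).
  by elim: s => //= j s ->.
have vars_uniq : uniq (vars (enum 'I_k)).
  apply: allpairs_uniq => [|//|[j t] [j' t'] _ _ /=]; first exact: enum_uniq.
  case: t t' => [] [] Ejj'.
  - by rewrite (inj_za _ _ Ejj').
  - by case: Ejj' => g_j0; move: (g_neq0 j); rewrite g_j0 eqxx.
  - by case: Ejj' => /esym g_j'0; move: (g_neq0 j'); rewrite g_j'0 eqxx.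
  - by case: Ejj' => /inj_b ->.
have S_vars : (fun t => t = f \/ UT_identity t) (lcomm (map (@lvar n F) (vars (enum 'I_k)))).
  by left; rewrite /f Evars.
have Eif s : i \notin s ->
    [seq (if j == i then [:: z j; y; yy j] else [:: z j; yy j]) | j <- s]
    = [seq [:: z j; yy j] | j <- s].
  move=> i_s; apply/eq_in_map => j j_s; case: eqP => // Eji.
  by rewrite -Eji j_s in i_s.
move: S_vars vars_uniq (enum_uniq 'I_k).
have /splitPr [s1 s2] : i \in enum 'I_k by rewrite mem_enum.
rewrite cat_uniq /= has_sym /= negb_or => S_vars vars_uniq.
case/and4P => _ /andP [i_s1 _] i_s2 _.
rewrite map_cat flatten_cat /= eqxx !Eif // !Evars.
apply: (in_TIdeal_lcomm_insert_var y S_vars vars_uniq (hom_var _ _ c)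
          (vars s1) (g i, a i) ((0, b i) :: vars s2)).
by rewrite /vars allpairs_cat allpairs_cons.
Qed.
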